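(* Let $p,r$ be coprime positive integers and $q=0$. Then $\mathcal O(L_0(p,r))$, with the $\mathbb C[u,u^{-1}]$-coaction given by its $\mathbb Z$-grading, is a quantum principal $U(1)$-fibration (principal $\mathbb C[u,u^{-1}]$-comodule algebra) over its coinvariant subalgebra $\mathcal O(\mathbb{WP}_0(1,r))$.
   Context: $\mathcal O(SU_0(2))$ is the unital complex $*$-algebra generated by $\alpha,\beta$ with relations $\beta\alpha=0$, $\beta^*\alpha=0$, $\beta\beta^*=\beta^*\beta$, $\alpha^*\alpha=1$, $\alpha\alpha^*+\beta\beta^*=1$. Give it the $\mathbb Z$-grading (weight) $w(\alpha)=1$, $w(\alpha^* )=-1$, $w(\beta)=r$, $w(\beta^* )=-r$. $\mathcal O(L_0(p,r))$ is the subalgebra of elements whose homogeneous components have weight in $p\mathbb Z$, graded by $\deg=w/p$, with coaction $\rho(x)=x\otimes u^{n}$ for $x$ of degree $n$; $\mathcal O(\mathbb{WP}_0(1,r))$ is its degree-zero subalgebra $B$. $A$ is a quantum principal fibration over $B$ if the canonical map $A\otimes_BA\to A\otimes\mathbb C[u,u^{-1}]$, $x\otimes y\mapsto xy\otimes u^n$ ($y$ of degree $n$), is bijective and the multiplication map $B\otimes A\to A$ admits a splitting that is a left $B$-module and right $\mathbb C[u,u^{-1}]$-comodule map. *)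

(* The complex numbers are  R[i] = complex R  for an
   arbitrary  R : realType  (every realType is (isomorphic to) the reals). *)
From HB Require Import structures.
From mathcomp Require Import all_boot all_order all_algebra.
From mathcomp Require Import complex reals.
Set Implicit Arguments. Unset Strict Implicit. Unset Printing Implicit Defensive.
Import Order.TTheory GRing.Theory Num.Theory.
Local Open Scope ring_scope.

Section Defs.
Variable R : realType.
Local Notation C := (complex R).

Definition is_star (A : algType C) (s : A -> A) : Prop :=
  (forall x y, s (x + y) = s x + s y) /\
  (forall (c : C) x, s (c *: x) = (Num.conj c) *: s x) /\
  (forall x y, s (x * y) = s y * s x) /\
  (forall x, s (s x) = x).

Definition star_alg_hom (A A' : algType C) (s : A -> A) (s' : A' -> A')
    (f : A -> A') : Prop :=
  (forall x y, f (x + y) = f x + f y) /\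
  (forall (c : C) x, f (c *: x) = c *: f x) /\
  (forall x y, f (x * y) = f x * f y) /\
  f 1 = 1 /\
  (forall x, f (s x) = s' (f x)).

(* The defining relations of O(SU_0(2)) for generators alpha = a, beta = b. *)
Definition su0_rels (A : algType C) (s : A -> A) (a b : A) : Prop :=
  b * a = 0 /\ s b * a = 0 /\ b * s b = s b * b /\ s a * a = 1 /\
  a * s a + b * s b = 1.

Definition is_O_SU0 (A : algType C) (s : A -> A) (a b : A) : Prop :=
  is_star s /\ su0_rels s a b /\
  forall (A' : algType C) (s' : A' -> A') (a' b' : A'),
    is_star s' -> su0_rels s' a' b' ->
    exists f : A -> A',
      (star_alg_hom s s' f /\ f a = a' /\ f b = b') /\
      forall g : A -> A', star_alg_hom s s' g -> g a = a' -> g b = b' ->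
        forall x, g x = f x.

(* pi k x is the weight-k homogeneous component of x: the pi k are linear
   projections onto a direct sum decomposition A = (+)_k A_k, the grading is
   multiplicative, and w(alpha)=1, w(alpha^* )=-1, w(beta)=r, w(beta^* )=-r. *)
Definition is_weight_grading (A : algType C) (s : A -> A) (a b : A) (r : nat)
    (pi : int -> A -> A) : Prop :=
  (forall k x y, pi k (x + y) = pi k x + pi k y) /\
  (forall k (c : C) x, pi k (c *: x) = c *: pi k x) /\
  (forall x, exists S : seq int,
      uniq S /\ x = \sum_(k <- S) pi k x /\ (forall k, k \notin S -> pi k x = 0)) /\
  (forall k l x, pi k (pi l x) = if k == l then pi l x else 0) /\
  (forall k l x y, pi (k + l) (pi k x * pi l y) = pi k x * pi l y) /\
  pi 1 a = a /\ pi (-1) (s a) = s a /\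
  pi (r%:Z) b = b /\ pi (- r%:Z) (s b) = s b.

Variable A : algType C.
Variable p : nat.
Variable pi : int -> A -> A.

(* O(L_0(p,r)): elements all of whose homogeneous components have weight in pZ *)
Definition inL (x : A) : Prop :=
  forall k : int, pi k x <> 0 -> exists n : int, k = n * p%:Z.

(* its degree-n component (deg = w/p) *)
Definition degc (n : int) (x : A) : A := pi (n * p%:Z) x.

(* O(WP_0(1,r)) = degree-zero part of O(L_0(p,r)) *)
Definition inB (x : A) : Prop := forall k : int, k != 0 -> pi k x = 0.

(* An element of L (x)_B L is represented by a finite list of pairs in L x L
   (the element sum x_i (x) y_i); two lists represent the same element iff
   every B-balanced biadditive map out of L x L agrees on them. *)
Definition balancedB (V : zmodType) (f : A -> A -> V) : Prop :=
  (forall x x' y, inL x -> inL x' -> inL y -> f (x + x') y = f x y + f x' y) /\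
  (forall x y y', inL x -> inL y -> inL y' -> f x (y + y') = f x y + f x y') /\
  (forall x c y, inL x -> inB c -> inL y -> f (x * c) y = f x (c * y)).

Definition tensB_eq (t1 t2 : seq (A * A)) : Prop :=
  forall (V : zmodType) (f : A -> A -> V), balancedB f ->
    \sum_(xy <- t1) f xy.1 xy.2 = \sum_(xy <- t2) f xy.1 xy.2.

(* Same for B (x)_C L : C-balanced biadditive maps out of B x L. *)
Definition balancedC (V : zmodType) (f : A -> A -> V) : Prop :=
  (forall x x' y, inB x -> inB x' -> inL y -> f (x + x') y = f x y + f x' y) /\
  (forall x y y', inB x -> inL y -> inL y' -> f x (y + y') = f x y + f x y') /\
  (forall x (c : C) y, inB x -> inL y -> f (c *: x) y = f x (c *: y)).

Definition tensC_eq (t1 t2 : seq (A * A)) : Prop :=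
  forall (V : zmodType) (f : A -> A -> V), balancedC f ->
    \sum_(xy <- t1) f xy.1 xy.2 = \sum_(xy <- t2) f xy.1 xy.2.

(* The canonical map  L (x)_B L -> L (x) C[u,u^-1],  x (x) y |-> sum_n x y_n (x) u^n,
   where an element of L (x) C[u,u^-1] is identified with the finitely
   supported family n |-> (coefficient of u^n) in L. *)
Definition can_map (t : seq (A * A)) (n : int) : A :=
  \sum_(xy <- t) xy.1 * degc n xy.2.

Definition quantum_principal_fibration : Prop :=
  (forall t1 t2 : seq (A * A),
      (forall xy, xy \in t1 -> inL xy.1 /\ inL xy.2) ->
      (forall xy, xy \in t2 -> inL xy.1 /\ inL xy.2) ->
      (forall n, can_map t1 n = can_map t2 n) -> tensB_eq t1 t2) /\
  (forall g : int -> A, (forall n, inL (g n)) ->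
      (exists S : seq int, forall n, n \notin S -> g n = 0) ->
      exists t : seq (A * A),
        (forall xy, xy \in t -> inL xy.1 /\ inL xy.2) /\
        forall n, can_map t n = g n) /\
  (* the multiplication B (x) L -> L has a splitting sp : L -> B (x) L which is
     a left B-module map and a right C[u,u^-1]-comodule map *)
  exists sp : A -> seq (A * A),
    (forall x, inL x -> forall xy, xy \in sp x -> inB xy.1 /\ inL xy.2) /\
    (forall x, inL x -> \sum_(xy <- sp x) xy.1 * xy.2 = x) /\
    (forall x y, inL x -> inL y -> tensC_eq (sp (x + y)) (sp x ++ sp y)) /\
    (forall c x, inB c -> inL x ->
       tensC_eq (sp (c * x)) [seq (c * xy.1, xy.2) | xy <- sp x]) /\
    (forall x n, inL x ->
       tensC_eq [seq (xy.1, degc n xy.2) | xy <- sp x] (sp (degc n x))).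

End Defs.

From HB Require Import structures.
From mathcomp Require Import all_boot all_order all_algebra.
From mathcomp Require Import complex reals.
From mathcomp Require Import zify.
From Stdlib Require Import ClassicalEpsilon.
Import Order.TTheory GRing.Theory Num.Theory.
Local Open Scope ring_scope.
Set Implicit Arguments. Unset Strict Implicit. Unset Printing Implicit Defensive.

(* The relations [s(a) a = 1] and [a s(a) + b s(b) = 1] show that 1 lies in
   [A_(-k) A_k] for every weight [k]: O(SU_0(2)) is strongly Z-graded, i.e. it has
   a strong connection [k |-> sum_i l_i (x) r_i], [l_i] of weight [-k], [r_i] of
   weight [k], [sum_i l_i r_i = 1].  For [k = -m < 0] it comes from the telescoping
   identity [a^m s(a)^m + sum_(i < m) a^i b s(b) s(a)^i = 1].  Its restriction to
   weights in [pZ] is a strong connection for O(L_0(p,r)) over its degree-zero part,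
   and then [x (x) u^n |-> sum_i x l_i (x)_B r_i] inverts the canonical map while
   [x |-> sum_n sum_i x_n l_i (x) r_i] splits the multiplication. *)

Lemma eq_big_supp (V : zmodType) (I : eqType) (F : I -> V) (P : pred I)
    (s1 s2 : seq I) :
  (forall i, ~~ P i -> F i = 0) -> uniq s1 -> uniq s2 ->
  (forall i, P i -> i \in s1) -> (forall i, P i -> i \in s2) ->
  \sum_(i <- s1) F i = \sum_(i <- s2) F i.
Proof.
move=> F0 u1 u2 sub1 sub2.
have sum_P s : \sum_(i <- s) F i = \sum_(i <- s | P i) F i.
  rewrite [RHS]big_mkcond; apply: eq_bigr => i _.
  by case: ifP => [//|/negbT]; apply: F0.
rewrite (sum_P s1) (sum_P s2) -[LHS]big_filter -[RHS]big_filter.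
apply/perm_big/uniq_perm; rewrite ?filter_uniq // => i.
by rewrite !mem_filter; case Pi: (P i) => //=; rewrite sub1 // sub2.
Qed.

Section AdditiveOn.
Variables (U V : zmodType) (P : U -> Prop) (g : U -> V).
Hypothesis P0 : P 0.
Hypothesis gD : forall x y, P x -> P y -> g (x + y) = g x + g y.

Lemma additive_on0 : g 0 = 0.
Proof. by apply: (addrI (g 0)); rewrite -gD // !addr0. Qed.

Hypothesis PD : forall x y, P x -> P y -> P (x + y).

Lemma additive_on_sum (I : eqType) (s : seq I) (F : I -> U) :
  (forall i, i \in s -> P (F i)) ->
  g (\sum_(i <- s) F i) = \sum_(i <- s) g (F i).
Proof.
elim: s => [|i s IH] sP; first by rewrite !big_nil additive_on0.
have Ps j : j \in s -> P (F j) by move=> js; apply: sP; rewrite inE js orbT.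
have PF : P (\sum_(j <- s) F j) by rewrite big_seq; apply: big_ind.
by rewrite !big_cons gD ?IH //; apply: sP; rewrite mem_head.
Qed.

End AdditiveOn.

Section GradedAlgebra.
Variables (R : realType) (A : algType (complex R)) (pi : int -> A -> A).
Hypothesis piD : forall k x y, pi k (x + y) = pi k x + pi k y.
Hypothesis pi_finite : forall x, exists S : seq int,
  uniq S /\ x = \sum_(k <- S) pi k x /\ (forall k, k \notin S -> pi k x = 0).
Hypothesis piK : forall k l x, pi k (pi l x) = if k == l then pi l x else 0.
Hypothesis piM : forall k l x y, pi (k + l) (pi k x * pi l y) = pi k x * pi l y.

Lemma pi0 k : pi k 0 = 0.
Proof. exact: (additive_on0 (P := fun=> True)). Qed.

Lemma pi_sum (I : Type) k (s : seq I) (F : I -> A) :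
  pi k (\sum_(i <- s) F i) = \sum_(i <- s) pi k (F i).
Proof.
by elim: s => [|i s IH]; rewrite ?big_nil ?pi0 // !big_cons piD IH.
Qed.

Definition homog (k : int) (x : A) : Prop := pi k x = x.

Lemma homog_pi k x : homog k (pi k x).
Proof. by rewrite /homog piK eqxx. Qed.

Lemma pi_homog k x j : homog k x -> pi j x = if j == k then x else 0.
Proof. by move=> hx; rewrite -hx piK hx. Qed.

Lemma homog_mul k l x y : homog k x -> homog l y -> homog (k + l) (x * y).
Proof. by move=> hx hy; rewrite /homog -{1}hx -{1}hy piM hx hy. Qed.

Lemma homog_exp k x n : homog 0 1 -> homog k x -> homog (n%:Z * k) (x ^+ n).
Proof.
move=> h1 hx; elim: n => [|n IH]; first by rewrite expr0 mul0r.
by rewrite exprS intS mulrDl mul1r; apply: homog_mul.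
Qed.

Lemma pi_decomposition x T : uniq T -> (forall k, pi k x != 0 -> k \in T) ->
  x = \sum_(k <- T) pi k x.
Proof.
move=> uT sub; have [S [uS [ex S0]]] := pi_finite x; rewrite {1}ex.
apply: (eq_big_supp (P := fun k => pi k x != 0)) => //.
- by move=> k /negPn/eqP.
- by move=> k; apply: contraR => /S0 ->; rewrite eqxx.
Qed.

Definition supp (x : A) : seq int :=
  proj1_sig (constructive_indefinite_description _ (pi_finite x)).

Lemma supp_spec x : uniq (supp x) /\ (forall k, pi k x != 0 -> k \in supp x).
Proof.
have [uS [_ S0]] := proj2_sig (constructive_indefinite_description _ (pi_finite x)).
by split=> // k; apply: contraR => /S0 ->; rewrite eqxx.
Qed.

Lemma pi_mulr k j x z : homog k z -> pi j (x * z) = pi (j - k) x * z.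
Proof.
move=> hz; have [uS subS] := supp_spec x.
rewrite {1}(pi_decomposition uS subS) big_distrl pi_sum.
rewrite [in RHS](pi_decomposition uS subS) pi_sum big_distrl.
apply: eq_bigr => l _; rewrite (pi_homog _ (homog_mul (homog_pi l x) hz)) piK.
by rewrite subr_eq; case: eqP => // _; rewrite /= mul0r.
Qed.

Lemma pi_mull k j x z : homog k z -> pi j (z * x) = z * pi (j - k) x.
Proof.
move=> hz; have [uS subS] := supp_spec x.
rewrite {1}(pi_decomposition uS subS) big_distrr pi_sum.
rewrite [in RHS](pi_decomposition uS subS) pi_sum big_distrr.
apply: eq_bigr => l _; rewrite (pi_homog _ (homog_mul hz (homog_pi l x))) piK.
by rewrite subr_eq [l + k]addrC; case: eqP => // _; rewrite /= mulr0.
Qed.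

Lemma inB_homog c : inB pi c <-> homog 0 c.
Proof.
split=> [hc | hc k k0]; last by rewrite (pi_homog _ hc) (negbTE k0).
have [uS subS] := supp_spec c.
rewrite /homog [RHS](pi_decomposition uS subS) [in LHS](pi_decomposition uS subS).
rewrite pi_sum; apply: eq_bigr => k _; rewrite piK.
by case: eqP => // /eqP; rewrite eq_sym => /hc ->.
Qed.

Lemma inB0 : inB pi 0.
Proof. by apply/inB_homog; apply: pi0. Qed.

Definition strong_connection (omega : int -> seq (A * A)) : Prop :=
  forall k, (forall lr, lr \in omega k -> homog (- k) lr.1 /\ homog k lr.2) /\
            \sum_(lr <- omega k) lr.1 * lr.2 = 1.

Section Veronese.
Variable p : nat.
Hypothesis p_gt0 : (0 < p)%N.
Local Notation inL := (inL p pi).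
Local Notation inB := (inB pi).
Local Notation degc := (degc p pi).

Lemma mulz_p_inj : injective (fun n : int => n * p%:Z).
Proof. by apply: mulIf; rewrite eqz_nat -lt0n. Qed.

Lemma homog_degc n x : homog (n * p%:Z) (degc n x).
Proof. exact: homog_pi. Qed.

Lemma degc_homog m n z : homog (m * p%:Z) z -> degc n z = if n == m then z else 0.
Proof. by move=> hz; rewrite /degc (pi_homog _ hz) (inj_eq mulz_p_inj). Qed.

Lemma inL_homog m z : homog (m * p%:Z) z -> inL z.
Proof. by move=> hz k; rewrite (pi_homog _ hz); case: eqP => // -> _; exists m. Qed.

Lemma inL_degc n x : inL (degc n x).
Proof. exact: inL_homog (homog_degc n x). Qed.

Lemma inL0 : inL 0.
Proof. by move=> k; rewrite pi0. Qed.

Lemma inLD x y : inL x -> inL y -> inL (x + y).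
Proof.
move=> hx hy k; rewrite piD => nz.
case: (eqVneq (pi k x) 0) => [x0|/eqP]; last exact: hx.
by apply: hy => y0; apply: nz; rewrite x0 y0 addr0.
Qed.

Lemma inL_mul_homog m x z : inL x -> homog (m * p%:Z) z -> inL (x * z).
Proof.
move=> hx hz k; rewrite (pi_mulr _ _ hz) => nz.
have [n en] : exists n, k - m * p%:Z = n * p%:Z.
  by apply: hx => x0; apply: nz; rewrite x0 mul0r.
by exists (n + m); rewrite mulrDl -en subrK.
Qed.

Definition dsupp (x : A) : seq int := undup [seq (k %/ p%:Z)%Z | k <- supp x].

Lemma dsupp_uniq x : uniq (dsupp x).
Proof. exact: undup_uniq. Qed.

Lemma mem_dsupp x n : degc n x != 0 -> n \in dsupp x.
Proof.
move=> nz; rewrite mem_undup; apply/mapP; exists (n * p%:Z).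
  exact: (supp_spec x).2.
by rewrite mulzK // eqz_nat -lt0n.
Qed.

Lemma degc_decomposition x D : inL x -> uniq D ->
  (forall n, degc n x != 0 -> n \in D) -> x = \sum_(n <- D) degc n x.
Proof.
move=> hx uD sub.
transitivity (\sum_(k <- [seq n * p%:Z | n <- D]) pi k x); last by rewrite big_map.
apply: pi_decomposition; first by rewrite (map_inj_uniq mulz_p_inj).
move=> k nz; have [n ek] := hx k (elimN eqP nz).
by apply/mapP; exists n => //; apply: sub; rewrite /degc -ek.
Qed.

Variable omega : int -> seq (A * A).
Hypothesis omegaP : strong_connection omega.

Lemma conn_expand k z : z = \sum_(lr <- omega k) z * lr.1 * lr.2.
Proof.
rewrite -{1}[z]mulr1 -(omegaP k).2 big_distrr.
by apply: eq_bigr => lr _; rewrite /= mulrA.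
Qed.

Lemma conn_inL n lr : lr \in omega (n * p%:Z) -> inL lr.2.
Proof. by move=> lrin; apply: inL_homog ((omegaP _).1 lr lrin).2. Qed.

Lemma conn_homog0 k z lr : lr \in omega k -> homog k z -> homog 0 (z * lr.1).
Proof. by move=> lrin hz; rewrite -(subrr k); apply: homog_mul hz ((omegaP k).1 lr lrin).1. Qed.

Lemma can_map_surj (g : int -> A) : (forall n, inL (g n)) ->
  (exists S : seq int, forall n, n \notin S -> g n = 0) ->
  exists t : seq (A * A), (forall xy, xy \in t -> inL xy.1 /\ inL xy.2) /\
    forall n, can_map p pi t n = g n.
Proof.
move=> gL [S gS].
exists (flatten [seq [seq (g n * lr.1, lr.2) | lr <- omega (n * p%:Z)]
                | n <- undup S]).
split=> [xy /flatten_mapP [n _ /mapP [lr lrin ->]] /= | m].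
  split; last exact: conn_inL lrin.
  apply: (inL_mul_homog (m := - n)) (gL n) _; rewrite mulNr.
  exact: ((omegaP _).1 lr lrin).1.
rewrite /can_map big_flatten big_map.
transitivity (\sum_(n <- undup S) if n == m then g n else 0).
  apply: eq_bigr => n _; rewrite big_map.
  under eq_big_seq => lr lrin.
    rewrite /= (degc_homog m ((omegaP _).1 lr lrin).2); over.
  case: eqP => [->|nm]; first by rewrite eqxx; apply: esym (conn_expand _ _).
  by rewrite big1 => [|lr _]; [rewrite eq_sym (introF eqP nm) | rewrite mulr0].
have [mS | mS] := boolP (m \in undup S).
  by rewrite -big_mkcond -big_filter filter_pred1_uniq ?undup_uniq // big_seq1.
rewrite big1_seq => [|n /andP [_ nS]]; first by rewrite gS // -mem_undup.
by case: eqP => // nm; rewrite -nm nS in mS.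
Qed.

(* On [L (x)_B L], [transl f (n * p) c] is [f] evaluated on the image of [c (x) u^n]
   under the inverse of the canonical map. *)
Definition transl (V : zmodType) (f : A -> A -> V) (k : int) (c : A) : V :=
  \sum_(lr <- omega k) f (c * lr.1) lr.2.

Section BalancedB.
Variables (V : zmodType) (f : A -> A -> V).
Hypothesis fB : balancedB p pi f.

Lemma balB_suml y (I : eqType) (s : seq I) (F : I -> A) : inL y ->
  (forall i, i \in s -> inL (F i)) ->
  f (\sum_(i <- s) F i) y = \sum_(i <- s) f (F i) y.
Proof.
move=> hy; apply: (additive_on_sum (P := inL) (g := f^~ y)); [exact: inL0 | | exact: inLD].
by move=> x x' hx hx'; apply: fB.1.
Qed.

Lemma balB_sumr x (I : eqType) (s : seq I) (F : I -> A) : inL x ->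
  (forall i, i \in s -> inL (F i)) ->
  f x (\sum_(i <- s) F i) = \sum_(i <- s) f x (F i).
Proof.
move=> hx; apply: (additive_on_sum (P := inL) (g := f x)); [exact: inL0 | | exact: inLD].
by move=> y y' hy hy'; apply: fB.2.1.
Qed.

Lemma balB_transl n x y : inL x -> homog (n * p%:Z) y ->
  f x y = transl f (n * p%:Z) (x * y).
Proof.
move=> hx hy; rewrite {1}(conn_expand (n * p%:Z) y) balB_sumr //.
  apply: eq_big_seq => lr lrin; rewrite -(fB.2.2 x (y * lr.1) lr.2) ?mulrA //.
    by apply/inB_homog; apply: conn_homog0 hy.
  exact: conn_inL lrin.
move=> lr lrin; apply: (inL_mul_homog (m := n)); last exact: ((omegaP _).1 lr lrin).2.
by apply: (inL_homog (m := 0)); rewrite mul0r; apply: conn_homog0 hy.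
Qed.

Lemma balB_sum_transl t D : (forall xy, xy \in t -> inL xy.1 /\ inL xy.2) ->
  uniq D -> (forall xy n, xy \in t -> degc n xy.2 != 0 -> n \in D) ->
  \sum_(xy <- t) f xy.1 xy.2 = \sum_(n <- D) transl f (n * p%:Z) (can_map p pi t n).
Proof.
move=> ht uD sub.
transitivity (\sum_(xy <- t) \sum_(n <- D) transl f (n * p%:Z) (xy.1 * degc n xy.2)).
  apply: eq_big_seq => xy xyt; have [hx hy] := ht xy xyt.
  rewrite {1}(degc_decomposition hy uD (sub xy ^~ xyt)) balB_sumr //.
    by apply: eq_bigr => n _; apply: balB_transl (homog_degc n _).
  by move=> n _; apply: inL_degc.
rewrite exchange_big; apply: eq_bigr => n _.
rewrite /transl exchange_big; apply: eq_big_seq => lr lrin.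
rewrite /can_map big_distrl balB_suml //; first exact: conn_inL lrin.
move=> xy xyt; rewrite /= -mulrA.
apply: (inL_mul_homog (m := 0)); first exact: (ht xy xyt).1.
by rewrite mul0r; apply: conn_homog0 lrin (homog_degc n _).
Qed.

End BalancedB.

Lemma can_map_inj (t1 t2 : seq (A * A)) :
  (forall xy, xy \in t1 -> inL xy.1 /\ inL xy.2) ->
  (forall xy, xy \in t2 -> inL xy.1 /\ inL xy.2) ->
  (forall n, can_map p pi t1 n = can_map p pi t2 n) -> tensB_eq p pi t1 t2.
Proof.
move=> h1 h2 eq12 V f fB.
pose D := undup (flatten [seq dsupp xy.2 | xy <- t1 ++ t2]).
have sub (t : seq (A * A)) : {subset t <= t1 ++ t2} ->
    forall xy n, xy \in t -> degc n xy.2 != 0 -> n \in D.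
  move=> tsub xy n xyt nz; rewrite mem_undup; apply/flatten_mapP.
  by exists xy; [apply: tsub | apply: mem_dsupp].
rewrite (balB_sum_transl fB h1 (undup_uniq _) (sub t1 _)); last first.
  by move=> xy xyt; rewrite mem_cat xyt.
rewrite (balB_sum_transl fB h2 (undup_uniq _) (sub t2 _)); last first.
  by move=> xy xyt; rewrite mem_cat xyt orbT.
by apply: eq_bigr => n _; rewrite eq12.
Qed.

Definition split_mul (x : A) : seq (A * A) :=
  flatten [seq [seq (degc n x * lr.1, lr.2) | lr <- omega (n * p%:Z)] | n <- dsupp x].

Lemma split_mul_mem x xy : xy \in split_mul x -> inB xy.1 /\ inL xy.2.
Proof.
move=> /flatten_mapP [n _ /mapP [lr lrin ->]] /=; split; last exact: conn_inL lrin.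
by apply/inB_homog; apply: conn_homog0 lrin (homog_degc n x).
Qed.

Lemma split_mul_sum x : inL x -> \sum_(xy <- split_mul x) xy.1 * xy.2 = x.
Proof.
move=> hx; rewrite /split_mul big_flatten big_map.
rewrite [RHS](degc_decomposition hx (dsupp_uniq x) (@mem_dsupp x)).
by apply: eq_bigr => n _; rewrite big_map [RHS](conn_expand (n * p%:Z)).
Qed.

Section BalancedC.
Variables (V : zmodType) (f : A -> A -> V).
Hypothesis fC : balancedC p pi f.

Lemma balC_transl0 n : transl f (n * p%:Z) 0 = 0.
Proof.
rewrite /transl big1_seq // => lr /andP [_ lrin]; rewrite mul0r.
apply: (additive_on0 (P := inB) (g := f^~ lr.2)); first exact: inB0.
by move=> x x' hx hx'; apply: fC.1 => //; apply: conn_inL lrin.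
Qed.

Lemma balC_translD n c c' : homog (n * p%:Z) c -> homog (n * p%:Z) c' ->
  transl f (n * p%:Z) (c + c') = transl f (n * p%:Z) c + transl f (n * p%:Z) c'.
Proof.
move=> hc hc'; rewrite /transl -big_split; apply: eq_big_seq => lr lrin.
rewrite mulrDl fC.1 //; last exact: conn_inL lrin.
  by apply/inB_homog; apply: conn_homog0 hc.
by apply/inB_homog; apply: conn_homog0 hc'.
Qed.

Lemma split_mul_transl x D : uniq D -> (forall n, degc n x != 0 -> n \in D) ->
  \sum_(xy <- split_mul x) f xy.1 xy.2 = \sum_(n <- D) transl f (n * p%:Z) (degc n x).
Proof.
move=> uD sub; rewrite /split_mul big_flatten big_map.
under eq_bigr => n _ do rewrite big_map.
apply: (eq_big_supp (P := fun n => degc n x != 0)) => //.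
- by move=> n /negPn/eqP ->; apply: balC_transl0.
- exact: dsupp_uniq.
- exact: mem_dsupp.
Qed.

Lemma split_mul_add x y :
  \sum_(xy <- split_mul (x + y)) f xy.1 xy.2 =
  \sum_(xy <- split_mul x ++ split_mul y) f xy.1 xy.2.
Proof.
pose D := undup (dsupp x ++ dsupp y).
have Dx n : degc n x != 0 -> n \in D.
  by move=> nz; rewrite mem_undup mem_cat mem_dsupp.
have Dy n : degc n y != 0 -> n \in D.
  by move=> nz; rewrite mem_undup mem_cat (mem_dsupp nz) orbT.
have degcD n : degc n (x + y) = degc n x + degc n y by apply: piD.
have Dxy n : degc n (x + y) != 0 -> n \in D.
  rewrite degcD; case: (eqVneq (degc n x) 0) => [->|/Dx //].
  by rewrite add0r; apply: Dy.
rewrite big_cat (split_mul_transl (undup_uniq _) Dxy).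
rewrite (split_mul_transl (undup_uniq _) Dx) (split_mul_transl (undup_uniq _) Dy).
rewrite /= -big_split; apply: eq_bigr => n _.
by rewrite degcD balC_translD //; apply: homog_degc.
Qed.

Lemma split_mul_lmod c x : inB c ->
  \sum_(xy <- split_mul (c * x)) f xy.1 xy.2 =
  \sum_(xy <- [seq (c * xy.1, xy.2) | xy <- split_mul x]) f xy.1 xy.2.
Proof.
move=> /inB_homog hc.
have degcM n : degc n (c * x) = c * degc n x.
  by rewrite /degc (pi_mull _ _ hc) subr0.
rewrite (split_mul_transl (dsupp_uniq x)); last first.
  move=> n; rewrite degcM => nz; apply: mem_dsupp; apply/eqP => x0.
  by move: nz; rewrite x0 mulr0 eqxx.
rewrite big_map /split_mul big_flatten big_map; apply: eq_bigr => n _.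
by rewrite degcM big_map /transl; apply: eq_bigr => lr _ /=; rewrite mulrA.
Qed.

Lemma split_mul_comod x m :
  \sum_(xy <- [seq (xy.1, degc m xy.2) | xy <- split_mul x]) f xy.1 xy.2 =
  \sum_(xy <- split_mul (degc m x)) f xy.1 xy.2.
Proof.
have degcK n : degc n (degc m x) = if n == m then degc m x else 0.
  exact: degc_homog (homog_degc m x).
rewrite (split_mul_transl (dsupp_uniq x)); last first.
  move=> n; rewrite degcK; case: (eqVneq n m) => [->|_]; first exact: mem_dsupp.
  by rewrite eqxx.
rewrite big_map /split_mul big_flatten big_map; apply: eq_bigr => n _.
rewrite degcK big_map; case: eqP => [->|nm].
  apply: eq_big_seq => lr lrin /=.
  by rewrite (degc_homog m ((omegaP _).1 lr lrin).2) eqxx.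
rewrite balC_transl0; apply: big1_seq => lr /andP [_ lrin] /=.
rewrite (degc_homog m ((omegaP _).1 lr lrin).2) eq_sym (introF eqP nm).
apply: (additive_on0 (P := inL) (g := f (degc n x * lr.1))); first exact: inL0.
move=> y y' hy hy'; apply: fC.2.1 => //.
by apply/inB_homog; apply: conn_homog0 lrin (homog_degc n x).
Qed.

End BalancedC.

Theorem strong_connection_principal : quantum_principal_fibration p pi.
Proof.
split; first exact: can_map_inj.
split; first exact: can_map_surj.
exists split_mul; split; first by move=> x _; apply: split_mul_mem.
split; first exact: split_mul_sum.
split; first by move=> x y _ _ V f fC; apply: split_mul_add.
split; first by move=> c x hc _ V f fC; apply: split_mul_lmod.
by move=> x n _ V f fC; apply: split_mul_comod.
Qed.

End Veronese.

Section SU0Connection.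
Variables (s : A -> A) (a b : A) (r : nat).
Hypothesis r_gt0 : (0 < r)%N.
Hypotheses (sb_a : s b * a = 0) (b_sb_comm : b * s b = s b * b).
Hypotheses (sa_a : s a * a = 1) (a_sa_b_sb : a * s a + b * s b = 1).
Hypotheses (ha : homog 1 a) (hsa : homog (-1) (s a)).
Hypotheses (hb : homog r%:Z b) (hsb : homog (- r%:Z) (s b)).

Lemma homog1 : homog 0 1.
Proof. by have := homog_mul hsa ha; rewrite addNr sa_a. Qed.

Lemma expr_sa_a n : s a ^+ n * a ^+ n = 1.
Proof.
elim: n => [|n IH]; first by rewrite !expr0 mulr1.
by rewrite exprSr exprS mulrA -(mulrA (s a ^+ n)) sa_a mulr1.
Qed.

Lemma b_sb_sb : b * (s b * s b) = s b.
Proof.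
have b_sb : b * s b = 1 - a * s a by rewrite -a_sa_b_sb addrAC subrr add0r.
by rewrite mulrA b_sb_comm -mulrA b_sb mulrBr mulr1 mulrA sb_a mul0r subr0.
Qed.

Lemma expr_b_sb n : b ^+ n.+1 * s b ^+ n.+1 = b * s b.
Proof.
elim: n => [|n IH]; first by rewrite !expr1.
rewrite exprSr (exprS (s b) n.+1) (exprS (s b) n) !mulrA.
rewrite -(mulrA (b ^+ n.+1 * b) (s b) (s b)) -(mulrA (b ^+ n.+1) b) b_sb_sb.
by rewrite -mulrA -exprS IH.
Qed.

Lemma a_sa_telescope m :
  a ^+ m * s a ^+ m + \sum_(i <- iota 0 m) a ^+ i * (b * s b) * s a ^+ i = 1.
Proof.
elim: m => [|m IH]; first by rewrite !expr0 mulr1 big_nil addr0.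
have a_sa_step : a ^+ m.+1 * s a ^+ m.+1 + a ^+ m * (b * s b) * s a ^+ m =
    a ^+ m * s a ^+ m.
  by rewrite exprSr exprS mulrA -(mulrA (a ^+ m) a) -mulrDl -mulrDr a_sa_b_sb mulr1.
have -> : iota 0 m.+1 = iota 0 m ++ [:: m] by rewrite -addn1 iotaD.
by rewrite big_cat big_seq1 /= addrCA a_sa_step addrC IH.
Qed.

(* For [k = -m], the term [a^i b s(b) s(a)^i] of [a_sa_telescope m] is factored as
   [(a^i b^m s(a)^e) (a^e s(b)^m s(a)^i)] with [e = (r - 1) m], which makes both
   factors homogeneous. *)
Definition su0_connection (k : int) : seq (A * A) :=
  match k with
  | Posz m => [:: (s a ^+ m, a ^+ m)]
  | Negz n =>
      (a ^+ n.+1, s a ^+ n.+1) ::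
      [seq (a ^+ i * b ^+ n.+1 * s a ^+ (i + r.-1 * n.+1),
            a ^+ (i + r.-1 * n.+1) * s b ^+ n.+1 * s a ^+ i) | i <- iota 0 n.+1]
  end.

Lemma su0_strong_connection : strong_connection su0_connection.
Proof.
have hpow k x n : homog k x -> homog (n%:Z * k) (x ^+ n) by apply: homog_exp homog1.
case=> [m|n]; split.
- move=> lr; rewrite inE => /eqP -> /=.
  by split; [rewrite -mulrN1 | rewrite -[Posz m]mulr1]; apply: hpow.
- by rewrite big_seq1 expr_sa_a.
- move=> lr; rewrite in_cons => /orP [/eqP -> | /mapP [i _ ->]] /=.
    rewrite NegzE opprK; split; first by rewrite -[Posz n.+1]mulr1; apply: hpow.
    by rewrite -mulrN1; apply: hpow.
  have -> : - Negz n = i%:Z * 1 + n.+1%:Z * r%:Z + (i + r.-1 * n.+1)%:Z * -1.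
    by rewrite NegzE; nia.
  have -> : Negz n = (i + r.-1 * n.+1)%:Z * 1 + n.+1%:Z * - r%:Z + i%:Z * -1.
    by rewrite NegzE; nia.
  by split; do 2?apply: homog_mul; apply: hpow.
- rewrite big_cons big_map -(a_sa_telescope n.+1); congr (_ + _).
  apply: eq_bigr => i _ /=.
  rewrite !mulrA -(mulrA (a ^+ i * b ^+ n.+1)) expr_sa_a mulr1.
  by rewrite -(mulrA (a ^+ i)) expr_b_sb !mulrA.
Qed.

End SU0Connection.

End GradedAlgebra.
Unset Implicit Arguments.
Set Strict Implicit.

Theorem theorem5p3 (R : realType) (A : algType (complex R)) (s : A -> A)
  (a b : A) (p r : nat) (pi : int -> A -> A) :
  (0 < p)%N -> (0 < r)%N -> coprime p r ->
  is_O_SU0 s a b -> is_weight_grading s a b r pi ->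
  quantum_principal_fibration p pi.
Proof.
move=> p_gt0 r_gt0 _ [_ [[_ [sb_a [b_sb_comm [sa_a a_sa_b_sb]]]] _]].
move=> [piD [_ [pi_finite [piK [piM [ha [hsa [hb hsb]]]]]]]].
apply: (strong_connection_principal piD pi_finite piK piM p_gt0).
exact: (su0_strong_connection piM r_gt0 sb_a b_sb_comm sa_a a_sa_b_sb ha hsa hb hsb).
Qed.
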